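(* Let $n\ge 2$ and let $G=(A,B,E)$ be a $(k,\epsilon)$-unbalanced expander with $|A|=n$, $|B|=m$ and left degree $d$, where $1/\epsilon<n$ and $d<n$. Let $\Phi$ be the $m\times n$ adjacency matrix of $G$. Then there is an absolute constant $C>1$ (independent of $n,m,k,d,\epsilon$) such that for every $p$ with $1\le p\le 1+1/\log n$ and every $k$-sparse vector $x\in\mathbb{R}^n$, $$(1-C\epsilon)\,\|x\|_p\;\le\;\|d^{-1/p}\Phi x\|_p\;\le\;(1+C\epsilon)\,\|x\|_p .$$ (In particular, for $p=1$ one may take $(1-2\epsilon)\|x\|_1\le \|\Phi x\|_1/d\le \|x\|_1$.)
   Context: A $(k,\epsilon)$-unbalanced expander is a simple bipartite graph $G=(A,B,E)$ in which every vertex of $A$ has exactly $d$ neighbours (left degree $d$) such that for every $X\subseteq A$ with $|X|\le k$, the neighbourhood $N(X)\subseteq B$ satisfies $|N(X)|\ge(1-\epsilon)d|X|$. The adjacency matrix of $G$ (with $A=\{1,\dots,n\}$, $B=\{1,\dots,m\}$) is the $m\times n$ $0$–$1$ matrix with entry $(j,i)$ equal to $1$ iff $(i,j)\in E$. A vector is $k$-sparse if it has at most $k$ nonzero coordinates. $\|x\|_p=(\sum_i|x_i|^p)^{1/p}$. *)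

From Stdlib Require Import Reals List Arith Lra.
Import ListNotations.
Open Scope R_scope.

Fixpoint fsum (n : nat) (f : nat -> R) : R :=
  match n with
  | O => 0
  | S n' => fsum n' f + f n'
  end.

(* a^b for a >= 0 (with 0^b = 0, b > 0 in all uses) *)
Definition rpow (a b : R) : R := if Rle_dec a 0 then 0 else Rpower a b.

Definition pnorm (n : nat) (p : R) (x : nat -> R) : R :=
  rpow (fsum n (fun i => rpow (Rabs (x i)) p)) (1 / p).

(* A simple bipartite graph G = (A, B, E) with A = {0..n-1}, B = {0..m-1}
   is given by a boolean edge relation E i j  (i in A, j in B). *)

Definition left_regular (n m d : nat) (E : nat -> nat -> bool) : Prop :=
  forall i, (i < n)%nat -> length (filter (E i) (seq 0 m)) = d.

Definition nbhd_card (m : nat) (E : nat -> nat -> bool) (X : list nat) : nat :=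
  length (filter (fun j => existsb (fun i => E i j) X) (seq 0 m)).

Definition unbalanced_expander (n m d k : nat) (eps : R)
    (E : nat -> nat -> bool) : Prop :=
  left_regular n m d E /\
  forall X : list nat, NoDup X -> (forall i, In i X -> (i < n)%nat) ->
    (length X <= k)%nat ->
    INR (nbhd_card m E X) >= (1 - eps) * INR d * INR (length X).

(* adjacency matrix: m x n 0-1 matrix, entry (j,i) = 1 iff (i,j) in E *)
Definition adj (E : nat -> nat -> bool) (j i : nat) : R :=
  if E i j then 1 else 0.

Definition matvec (n : nat) (Phi : nat -> nat -> R) (x : nat -> R) : nat -> R :=
  fun j => fsum n (fun i => Phi j i * x i).

Definition sparse (n k : nat) (x : nat -> R) : Prop :=
  exists S : list nat, NoDup S /\ (length S <= k)%nat /\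
    forall i, (i < n)%nat -> ~ In i S -> x i = 0.

From Stdlib Require Import Reals List Arith Lra Lia.
Import ListNotations.
Open Scope R_scope.

(* Fix a k-sparse x supported on a list T of columns.  For a row j let S_j (row mass) be
   the sum of |x_i| over the neighbours i in T of j, M_j (row peak) the largest of these
   terms and D_j = S_j - M_j (collision mass).  Regularity gives sum_j S_j = d ||x||_1, and
   the expansion property gives the collision lemma sum_j D_j <= eps d ||x||_1, proved by
   peeling off the column of smallest weight (an Abel summation).  By the triangle
   inequality M_j - D_j <= |(Phi x)_j| <= S_j, which is the l_1 statement.  For p > 1 the
   collision lemma applied to the weights |x_i|^p shows that sum_j M_j^p is within
   eps d ||x||_p^p of d ||x||_p^p; convexity of t^p turns the row squeeze into
   | |(Phi x)_j|^p - M_j^p | <= 9 (max|x|)^(p-1) D_j, because S_j <= n max|x| and n^(p-1) <= 3;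
   and (max|x|)^(p-1) ||x||_1 <= 4 ||x||_p^p.  Altogether ||Phi x||_p^p = d ||x||_p^p up to a
   relative error 37 eps, and taking p-th roots gives the theorem with C = 37. *)

Lemma rpow_of_pos a q : 0 < a -> rpow a q = Rpower a q.
Proof. intros Ha; unfold rpow; destruct (Rle_dec a 0); [lra | reflexivity]. Qed.

Lemma rpow_zero q : rpow 0 q = 0.
Proof. unfold rpow; destruct (Rle_dec 0 0); [reflexivity | lra]. Qed.

Lemma rpow_pos a q : 0 < a -> 0 < rpow a q.
Proof. intros Ha; rewrite rpow_of_pos by exact Ha; apply exp_pos. Qed.

Lemma rpow_nonneg a q : 0 <= rpow a q.
Proof.
  destruct (Rle_dec a 0) as [Ha | Ha].
  - unfold rpow; destruct (Rle_dec a 0); [lra | contradiction].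
  - left; apply rpow_pos; lra.
Qed.

Lemma rpow_one a : 0 <= a -> rpow a 1 = a.
Proof.
  intros Ha; destruct (Req_dec a 0) as [-> | Ha0]; [apply rpow_zero |].
  rewrite rpow_of_pos by lra; apply Rpower_1; lra.
Qed.

Lemma rpow_le_compat a b q : 0 <= q -> a <= b -> rpow a q <= rpow b q.
Proof.
  intros Hq Hab; destruct (Rle_dec a 0) as [Ha | Ha].
  - unfold rpow at 1; destruct (Rle_dec a 0); [apply rpow_nonneg | contradiction].
  - rewrite !rpow_of_pos by lra; apply Rle_Rpower_l; lra.
Qed.

Lemma rpow_mult a b q : 0 <= a -> 0 <= b -> rpow (a * b) q = rpow a q * rpow b q.
Proof.
  intros Ha Hb.
  destruct (Req_dec a 0) as [-> | Ha0]; [rewrite Rmult_0_l, !rpow_zero; ring |].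
  destruct (Req_dec b 0) as [-> | Hb0]; [rewrite Rmult_0_r, !rpow_zero; ring |].
  rewrite !rpow_of_pos by nra; symmetry; apply Rpower_mult_distr; lra.
Qed.

(* a^p = a * a^(p-1), valid also at a = 0 thanks to the convention 0^q = 0 *)
Lemma rpow_succ a p : 0 <= a -> rpow a p = a * rpow a (p - 1).
Proof.
  intros Ha; destruct (Req_dec a 0) as [-> | Ha0]; [rewrite !rpow_zero; ring |].
  rewrite !rpow_of_pos by lra; replace p with (1 + (p - 1)) at 1 by ring.
  rewrite Rpower_plus, Rpower_1; lra.
Qed.

Lemma rpow_root_le a q : 1 <= a -> 0 < q <= 1 -> rpow a q <= a.
Proof.
  intros Ha Hq; rewrite rpow_of_pos by lra; rewrite <- (Rpower_1 a) at 2 by lra.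
  apply Rle_Rpower; lra.
Qed.

Lemma exp_le_compat a b : a <= b -> exp a <= exp b.
Proof. intros Hab; destruct (Req_dec a b) as [-> | Hne]; [lra | left; apply exp_increasing; lra]. Qed.

Lemma rpow_root_ge a q : 0 <= a <= 1 -> 0 < q <= 1 -> a <= rpow a q.
Proof.
  intros Ha Hq; destruct (Req_dec a 0) as [-> | Ha0]; [rewrite rpow_zero; lra |].
  rewrite rpow_of_pos by lra; rewrite <- (Rpower_1 a) at 1 by lra.
  assert (Hln : ln a <= 0).
  { destruct (Req_dec a 1) as [-> | Ha1]; [rewrite ln_1; lra |].
    left; rewrite <- ln_1; apply ln_increasing; lra. }
  apply exp_le_compat; nra.
Qed.

(* Weighted AM-GM, i.e. concavity of z |-> z^q for 0 <= q <= 1:  z^q <= q z + (1 - q).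
   Both exp a and exp 0 lie above the tangent of exp at c = q ln z. *)
Lemma Rpower_am_gm z q : 0 < z -> 0 <= q <= 1 -> Rpower z q <= q * z + (1 - q).
Proof.
  intros Hz Hq; unfold Rpower; set (a := ln z); set (c := q * a).
  assert (Hza : exp a = z) by (apply exp_ln; exact Hz).
  assert (Htan_a : exp c * (1 + (a - c)) <= exp a).
  { replace a with (c + (a - c)) at 2 by ring; rewrite exp_plus.
    pose proof (exp_ineq1_le (a - c)); pose proof (exp_pos c); nra. }
  assert (Htan_0 : exp c * (1 - c) <= 1).
  { assert (Hinv : exp c * exp (- c) = 1)
      by (rewrite <- exp_plus, Rplus_opp_r; apply exp_0).
    pose proof (exp_ineq1_le (- c)); pose proof (exp_pos c); nra. }
  assert (Hcomb : exp c = q * (exp c * (1 + (a - c))) + (1 - q) * (exp c * (1 - c)))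
    by (unfold c; ring).
  rewrite <- Hza; fold c; nra.
Qed.

Lemma bernoulli_real y p : 0 <= y -> 1 <= p -> 1 + p * (y - 1) <= rpow y p.
Proof.
  intros Hy Hp; destruct (Req_dec y 0) as [-> | Hy0]; [rewrite rpow_zero; nra |].
  rewrite rpow_of_pos by lra.
  assert (Hq : 0 <= 1 / p <= 1).
  { split; [apply Rlt_le, Rdiv_lt_0_compat; lra |].
    apply (Rmult_le_reg_l p); [lra |]; field_simplify; lra. }
  pose proof (Rpower_am_gm (Rpower y p) (1 / p) (exp_pos _) Hq) as Hamgm.
  rewrite Rpower_mult in Hamgm; replace (p * (1 / p)) with 1 in Hamgm by (field; lra).
  rewrite Rpower_1 in Hamgm by lra.
  apply (Rmult_le_compat_l p) in Hamgm; [| lra].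
  replace (p * (1 / p * Rpower y p + (1 - 1 / p))) with (Rpower y p + p - 1) in Hamgm
    by (field; lra).
  lra.
Qed.

Lemma rpow_tangent t u p : 0 <= t -> 0 <= u -> 1 <= p ->
  rpow u p + p * rpow u (p - 1) * (t - u) <= rpow t p.
Proof.
  intros Ht Hu Hp; destruct (Req_dec u 0) as [-> | Hu0].
  { rewrite !rpow_zero; pose proof (rpow_nonneg t p); lra. }
  assert (Htu : 0 <= t / u) by (apply Rmult_le_pos; [lra | left; apply Rinv_0_lt_compat; lra]).
  replace t with (u * (t / u)) at 2 by (field; lra).
  rewrite rpow_mult by lra.
  pose proof (bernoulli_real (t / u) p Htu Hp).
  pose proof (rpow_pos u p ltac:(lra)).
  assert (Heq : rpow u p * (1 + p * (t / u - 1)) = rpow u p + p * rpow u (p - 1) * (t - u))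
    by (rewrite (rpow_succ u p) by lra; field; lra).
  nra.
Qed.

(* This is the row-wise estimate:
   M is the peak of a row, S its mass and t the absolute value of the row sum. *)
Lemma power_squeeze t M S K p : 0 <= t -> 0 <= M <= S -> 2 * M - S <= t <= S ->
  1 <= p <= 3 -> rpow S (p - 1) <= K ->
  rpow M p - 3 * K * (S - M) <= rpow t p <= rpow M p + 3 * K * (S - M).
Proof.
  intros Ht HMS Hsq Hp HK.
  pose proof (rpow_nonneg M (p - 1)); pose proof (rpow_nonneg S (p - 1)).
  assert (HMK : rpow M (p - 1) <= K) by (eapply Rle_trans; [apply (rpow_le_compat M S) |]; lra).
  assert (HpK : p * rpow M (p - 1) <= 3 * K /\ p * rpow S (p - 1) <= 3 * K) by (split; nra).
  split.
  - destruct (Rle_dec 0 (2 * M - S)) as [Hpos | Hneg].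
    + pose proof (rpow_tangent (2 * M - S) M p Hpos ltac:(lra) ltac:(lra)).
      pose proof (rpow_le_compat (2 * M - S) t p ltac:(lra) ltac:(lra)).
      nra.
    + rewrite (rpow_succ M p) by lra; pose proof (rpow_nonneg t p); nra.
  - pose proof (rpow_tangent M S p ltac:(lra) ltac:(lra) ltac:(lra)).
    pose proof (rpow_le_compat t S p ltac:(lra) ltac:(lra)).
    nra.
Qed.

Lemma root_relative_bound X Y D c p : 0 <= X -> 0 < D -> 0 <= c -> 1 <= p ->
  (1 - c) * (D * X) <= Y <= (1 + c) * (D * X) ->
  (1 - c) * rpow X (1 / p) <= rpow (/ D * Y) (1 / p) <= (1 + c) * rpow X (1 / p).
Proof.
  intros HX HD Hc Hp [HYl HYu].
  assert (Hq : 0 < 1 / p <= 1).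
  { split; [apply Rdiv_lt_0_compat; lra |].
    apply (Rmult_le_reg_l p); [lra |]; field_simplify; lra. }
  assert (HiD : 0 < / D) by (apply Rinv_0_lt_compat; lra).
  assert (Hlow : (1 - c) * X <= / D * Y).
  { replace ((1 - c) * X) with (/ D * ((1 - c) * (D * X))) by (field; lra).
    apply Rmult_le_compat_l; lra. }
  assert (Hup : / D * Y <= (1 + c) * X).
  { replace ((1 + c) * X) with (/ D * ((1 + c) * (D * X))) by (field; lra).
    apply Rmult_le_compat_l; lra. }
  pose proof (rpow_nonneg X (1 / p)).
  split.
  - destruct (Rle_dec (1 - c) 0) as [Hc1 | Hc1].
    { pose proof (rpow_nonneg (/ D * Y) (1 / p)); nra. }
    apply Rle_trans with (rpow ((1 - c) * X) (1 / p)).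
    + rewrite rpow_mult by lra; apply Rmult_le_compat_r; [lra |].
      apply rpow_root_ge; lra.
    + apply rpow_le_compat; lra.
  - apply Rle_trans with (rpow ((1 + c) * X) (1 / p)).
    + apply rpow_le_compat; lra.
    + rewrite rpow_mult by lra; apply Rmult_le_compat_r; [lra |].
      apply rpow_root_le; lra.
Qed.


Lemma fsum_ext N f g : (forall i, f i = g i) -> fsum N f = fsum N g.
Proof. intros Hfg; induction N as [| N IH]; simpl; [reflexivity | rewrite IH, Hfg; reflexivity]. Qed.

Lemma fsum_plus N f g : fsum N (fun i => f i + g i) = fsum N f + fsum N g.
Proof. induction N as [| N IH]; simpl; [lra | rewrite IH; lra]. Qed.

Lemma fsum_minus N f g : fsum N (fun i => f i - g i) = fsum N f - fsum N g.
Proof. induction N as [| N IH]; simpl; [lra | rewrite IH; lra]. Qed.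

Lemma fsum_scal N c f : fsum N (fun i => c * f i) = c * fsum N f.
Proof. induction N as [| N IH]; simpl; [lra | rewrite IH; lra]. Qed.

Lemma fsum_le N f g : (forall i, f i <= g i) -> fsum N f <= fsum N g.
Proof. intros Hfg; induction N as [| N IH]; simpl; [lra | specialize (Hfg N); lra]. Qed.

Lemma fsum_zero N : fsum N (fun _ => 0) = 0.
Proof. induction N as [| N IH]; simpl; [reflexivity | rewrite IH; lra]. Qed.

Definition iverson (b : bool) : R := if b then 1 else 0.

Lemma iverson_nonneg b : 0 <= iverson b.
Proof. destruct b; simpl; lra. Qed.

Lemma INR_length_filter (P : nat -> bool) m :
  INR (length (filter P (seq 0 m))) = fsum m (fun j => iverson (P j)).
Proof.
  induction m as [| m IH]; [simpl; lra |].
  rewrite seq_S, filter_app, length_app, plus_INR, IH; simpl.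
  unfold iverson; destruct (P m); simpl; lra.
Qed.

Definition lsum (f : nat -> R) (l : list nat) : R := fold_right (fun i acc => f i + acc) 0 l.
Definition lmax (f : nat -> R) (l : list nat) : R := fold_right (fun i acc => Rmax (f i) acc) 0 l.

Lemma lsum_ext f g l : (forall i, In i l -> f i = g i) -> lsum f l = lsum g l.
Proof.
  induction l as [| a l IH]; simpl; intros Hfg; [reflexivity |].
  rewrite Hfg, IH by auto; reflexivity.
Qed.

Lemma lsum_plus f g l : lsum (fun i => f i + g i) l = lsum f l + lsum g l.
Proof. induction l as [| a l IH]; simpl; [lra | rewrite IH; lra]. Qed.

Lemma lsum_scal c f l : lsum (fun i => c * f i) l = c * lsum f l.
Proof. induction l as [| a l IH]; simpl; [lra | rewrite IH; lra]. Qed.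

Lemma lsum_le f g l : (forall i, In i l -> f i <= g i) -> lsum f l <= lsum g l.
Proof.
  induction l as [| a l IH]; simpl; intros Hfg; [lra |].
  pose proof (Hfg a (or_introl eq_refl)); pose proof (IH (fun i Hi => Hfg i (or_intror Hi))); lra.
Qed.

Lemma lsum_const c l : lsum (fun _ => c) l = INR (length l) * c.
Proof. induction l as [| a l IH]; simpl lsum; [simpl; lra | rewrite IH, length_cons, S_INR; lra]. Qed.

Lemma lsum_nonneg f l : (forall i, In i l -> 0 <= f i) -> 0 <= lsum f l.
Proof. intros Hf; rewrite <- (Rmult_0_r (INR (length l))), <- lsum_const; apply lsum_le, Hf. Qed.

Lemma lsum_zero f l : (forall i, In i l -> f i = 0) -> lsum f l = 0.
Proof. intros Hf; rewrite (lsum_ext f (fun _ => 0)) by exact Hf; rewrite lsum_const; ring. Qed.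

Lemma lsum_le_length f l c : (forall i, In i l -> f i <= c) -> lsum f l <= INR (length l) * c.
Proof. intros Hf; rewrite <- lsum_const; apply lsum_le, Hf. Qed.

Lemma lsum_mid f l1 a l2 : lsum f (l1 ++ a :: l2) = f a + lsum f (l1 ++ l2).
Proof. induction l1 as [| b l1 IH]; simpl; [reflexivity | rewrite IH; ring]. Qed.

Lemma lmax_nonneg f l : 0 <= lmax f l.
Proof. induction l as [| a l IH]; simpl; [lra | eapply Rle_trans; [exact IH | apply Rmax_r]]. Qed.

Lemma lmax_ge f l i : In i l -> f i <= lmax f l.
Proof.
  induction l as [| a l IH]; simpl; intros Hi; [contradiction |].
  destruct Hi as [-> | Hi]; [apply Rmax_l | eapply Rle_trans; [apply IH, Hi | apply Rmax_r]].
Qed.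

Lemma lmax_lub f l c : 0 <= c -> (forall i, In i l -> f i <= c) -> lmax f l <= c.
Proof. intros Hc Hf; induction l as [| a l IH]; simpl; [exact Hc |]; apply Rmax_lub; auto with datatypes. Qed.

Lemma lmax_ext f g l : (forall i, In i l -> f i = g i) -> lmax f l = lmax g l.
Proof.
  induction l as [| a l IH]; simpl; intros Hfg; [reflexivity |].
  rewrite Hfg, IH by auto; reflexivity.
Qed.

Lemma lmax_le_lsum f l : (forall i, In i l -> 0 <= f i) -> lmax f l <= lsum f l.
Proof.
  induction l as [| a l IH]; simpl; intros Hf; [lra |].
  pose proof (Hf a (or_introl eq_refl)); pose proof (lsum_nonneg f l (fun i Hi => Hf i (or_intror Hi))).
  pose proof (IH (fun i Hi => Hf i (or_intror Hi))); apply Rmax_lub; lra.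
Qed.

Lemma lmax_zero f l : (forall i, In i l -> f i = 0) -> lmax f l = 0.
Proof.
  intros Hf; apply Rle_antisym; [| apply lmax_nonneg].
  apply lmax_lub; [lra | intros i Hi; rewrite Hf by exact Hi; lra].
Qed.

Lemma lmax_mid f l1 a l2 : lmax f (l1 ++ a :: l2) = Rmax (f a) (lmax f (l1 ++ l2)).
Proof.
  induction l1 as [| b l1 IH]; simpl; [reflexivity |].
  rewrite IH, !Rmax_assoc, (Rmax_comm (f b)); reflexivity.
Qed.

Lemma lmax_map (h : R -> R) f l : h 0 = 0 ->
  (forall a b, 0 <= a <= b -> h a <= h b) -> (forall i, In i l -> 0 <= f i) ->
  lmax (fun i => h (f i)) l = h (lmax f l).
Proof.
  intros Hh0 Hmono; induction l as [| a l IH]; simpl; intros Hf; [exact (eq_sym Hh0) |].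
  rewrite IH by auto.
  pose proof (lmax_nonneg f l); pose proof (Hf a (or_introl eq_refl)).
  destruct (Rle_dec (f a) (lmax f l)) as [Hle | Hgt].
  - rewrite !Rmax_right by (auto; apply Hmono; lra); reflexivity.
  - rewrite !Rmax_left by (auto; try apply Hmono; lra); reflexivity.
Qed.

Lemma existsb_mid (P : nat -> bool) l1 a l2 :
  existsb P (l1 ++ a :: l2) = (P a || existsb P (l1 ++ l2))%bool.
Proof.
  induction l1 as [| b l1 IH]; simpl; [reflexivity |].
  rewrite IH; destruct (P a), (P b); reflexivity.
Qed.

Lemma list_argmin (g : nat -> R) l : l <> [] -> exists a, In a l /\ forall i, In i l -> g a <= g i.
Proof.
  induction l as [| b l IH]; intros Hne; [congruence |].
  destruct l as [| c l].
  { exists b; split; [left; reflexivity | intros i [-> | []]; lra]. }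
  destruct (IH ltac:(discriminate)) as [a [Ha Hmin]].
  destruct (Rle_dec (g b) (g a)) as [Hba | Hab].
  - exists b; split; [left; reflexivity |].
    intros i [-> | Hi]; [lra | specialize (Hmin i Hi); lra].
  - exists a; split; [right; exact Ha |].
    intros i [-> | Hi]; [lra | auto].
Qed.

Lemma fsum_support N f T : NoDup T -> (forall i, In i T -> (i < N)%nat) ->
  (forall i, (i < N)%nat -> ~ In i T -> f i = 0) -> fsum N f = lsum f T.
Proof.
  revert T; induction N as [| N IH]; intros T Hnd Hlt Hz.
  - destruct T as [| a T]; [reflexivity |]; specialize (Hlt a (or_introl eq_refl)); lia.
  - simpl; destruct (in_dec Nat.eq_dec N T) as [Hin | Hout].
    + destruct (in_split _ _ Hin) as [T1 [T2 ->]].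
      rewrite lsum_mid, (IH (T1 ++ T2)); [ring | eapply NoDup_remove_1; eauto | |].
      * intros i Hi; assert (i <> N) by (intros ->; exact (NoDup_remove_2 _ _ _ Hnd Hi)).
        assert (Hi' : In i (T1 ++ N :: T2)) by (apply in_app_or in Hi; apply in_or_app; simpl; tauto).
        specialize (Hlt i Hi'); lia.
      * intros i Hi Hni; apply Hz; [lia |]; intros Hc.
        apply in_app_or in Hc; simpl in Hc.
        destruct Hc as [Hc | [Hc | Hc]]; [| lia |]; apply Hni, in_or_app; auto.
    + rewrite (Hz N), (IH T); [ring | exact Hnd | | | lia | exact Hout].
      * intros i Hi; specialize (Hlt i Hi); assert (i <> N) by (intros ->; contradiction); lia.
      * intros i Hi Hni; apply Hz; [lia | exact Hni].
Qed.

Lemma fsum_lsum_swap m (F : nat -> nat -> R) l :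
  fsum m (fun j => lsum (fun i => F i j) l) = lsum (fun i => fsum m (F i)) l.
Proof. induction l as [| a l IH]; simpl; [apply fsum_zero | rewrite fsum_plus, IH; reflexivity]. Qed.

Lemma length_bounded_nodup n T : NoDup T -> (forall i, In i T -> (i < n)%nat) -> (length T <= n)%nat.
Proof.
  intros Hnd Hlt; rewrite <- (length_seq n 0); apply NoDup_incl_length; [exact Hnd |].
  intros i Hi; apply in_seq; specialize (Hlt i Hi); lia.
Qed.

Lemma lsum_abs_upper v l : Rabs (lsum v l) <= lsum (fun i => Rabs (v i)) l.
Proof.
  induction l as [| a l IH]; simpl; [rewrite Rabs_R0; lra |].
  pose proof (Rabs_triang (v a) (lsum v l)); lra.
Qed.

Lemma lsum_abs_lower v l :
  2 * lmax (fun i => Rabs (v i)) l - lsum (fun i => Rabs (v i)) l <= Rabs (lsum v l).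
Proof.
  induction l as [| a l IH]; simpl; [rewrite Rabs_R0; lra |].
  pose proof (lsum_abs_upper v l).
  pose proof (Rabs_triang_inv (v a) (- lsum v l)); pose proof (Rabs_triang_inv (lsum v l) (- v a)).
  rewrite Rabs_Ropp in *; unfold Rminus in *; rewrite Ropp_involutive in *.
  rewrite (Rplus_comm (lsum v l)) in *.
  destruct (Rle_dec (Rabs (v a)) (lmax (fun i => Rabs (v i)) l)).
  - rewrite Rmax_right by assumption; lra.
  - rewrite Rmax_left by lra; lra.
Qed.

Definition row_weight (E : nat -> nat -> bool) (g : nat -> R) (j i : nat) : R := iverson (E i j) * g i.
Definition row_mass E g T j : R := lsum (row_weight E g j) T.
Definition row_peak E g T j : R := lmax (row_weight E g j) T.
Definition collision E g T j : R := row_mass E g T j - row_peak E g T j.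

Definition covered (E : nat -> nat -> bool) (T : list nat) (j : nat) : R :=
  iverson (existsb (fun i => E i j) T).

Lemma row_weight_nonneg E g j i : 0 <= g i -> 0 <= row_weight E g j i.
Proof. intros Hg; unfold row_weight; pose proof (iverson_nonneg (E i j)); nra. Qed.

(* Adding a column a of weight not exceeding the others raises the collision mass of row j
   by g a exactly when j was already covered, i.e. when the new edge a ~ j collides. *)
Lemma collision_insert E g T1 a T2 j : (forall i, 0 <= g i) ->
  (forall i, In i (T1 ++ T2) -> g a <= g i) ->
  collision E g (T1 ++ a :: T2) j = collision E g (T1 ++ T2) j +
    g a * (iverson (E a j) + covered E (T1 ++ T2) j - covered E (T1 ++ a :: T2) j).
Proof.
  intros Hg Hmin; unfold collision, row_mass, row_peak, covered.
  rewrite lsum_mid, lmax_mid, existsb_mid.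
  unfold row_weight at 1 3; pose proof (Hg a).
  destruct (E a j) eqn:Eaj; simpl.
  - destruct (existsb (fun i => E i j) (T1 ++ T2)) eqn:Hex; simpl.
    + apply existsb_exists in Hex; destruct Hex as [i [Hi Eij]].
      assert (Hpeak : g a <= lmax (row_weight E g j) (T1 ++ T2)).
      { apply Rle_trans with (row_weight E g j i); [| apply lmax_ge, Hi].
        unfold row_weight; rewrite Eij; simpl; specialize (Hmin i Hi); lra. }
      rewrite Rmax_right by lra; lra.
    + assert (Hzero : forall i, In i (T1 ++ T2) -> row_weight E g j i = 0).
      { intros i Hi; unfold row_weight.
        assert (Eij : E i j = false).
        { destruct (E i j) eqn:Eij; [| reflexivity].
          rewrite <- Hex; symmetry; apply existsb_exists; eauto. }
        rewrite Eij; simpl; ring. }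
      rewrite lsum_zero, lmax_zero, Rmax_left by (auto; lra); lra.
  - rewrite Rmult_0_l, Rmax_right by apply lmax_nonneg.
    destruct (existsb (fun i => E i j) (T1 ++ T2)); simpl; lra.
Qed.

Section Collisions.

Variables (n m d k : nat) (eps : R) (E : nat -> nat -> bool).
Hypothesis expander : unbalanced_expander n m d k eps E.

Lemma degree_sum i : (i < n)%nat -> fsum m (fun j => iverson (E i j)) = INR d.
Proof. intros Hi; rewrite <- (proj1 expander i Hi), INR_length_filter; reflexivity. Qed.

Lemma total_row_mass g T : (forall i, In i T -> (i < n)%nat) ->
  fsum m (row_mass E g T) = INR d * lsum g T.
Proof.
  intros Hlt; unfold row_mass, row_weight.
  rewrite (fsum_lsum_swap m (fun i j => iverson (E i j) * g i)), <- lsum_scal.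
  apply lsum_ext; intros i Hi.
  rewrite (fsum_ext _ _ (fun j => g i * iverson (E i j))) by (intros; ring).
  rewrite fsum_scal, degree_sum by auto; ring.
Qed.

(* Collision lemma, strengthened for the induction: with h below every weight on T, the
   total collision mass plus h times the expansion slack eps d |T| - (d |T| - |N(T)|)
   is at most eps d sum_T g.  The smallest weight is peeled off at each step. *)
Lemma collision_bound_slack g : (forall i, 0 <= g i) -> forall r T, length T = r -> NoDup T ->
  (forall i, In i T -> (i < n)%nat) -> (length T <= k)%nat ->
  forall h, 0 <= h -> (forall i, In i T -> h <= g i) ->
  fsum m (collision E g T)
    + (eps * INR d * INR (length T) - (INR d * INR (length T) - fsum m (covered E T))) * h
    <= eps * INR d * lsum g T.
Proof.
  intros Hg r; induction r as [| r IH]; intros T Hlen Hnd Hlt Hk h Hh Hhg.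
  - destruct T; [| discriminate]; simpl.
    assert (Hcol : fsum m (collision E g []) = 0).
    { rewrite <- (fsum_zero m); apply fsum_ext; intros j.
      unfold collision, row_mass, row_peak; simpl; ring. }
    assert (Hcov : fsum m (covered E []) = 0) by exact (fsum_zero m).
    rewrite Hcol, Hcov; lra.
  - destruct (list_argmin g T) as [a [Ha Hmin]]; [destruct T; discriminate |].
    destruct (in_split _ _ Ha) as [T1 [T2 ->]].
    assert (Hin : forall i, In i (T1 ++ T2) -> In i (T1 ++ a :: T2))
      by (intros i Hi; apply in_app_or in Hi; apply in_or_app; simpl; tauto).
    rewrite length_app in Hlen; simpl in Hlen.
    assert (Hexp : INR (nbhd_card m E (T1 ++ a :: T2))
                   >= (1 - eps) * INR d * INR (length (T1 ++ a :: T2)))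
      by (apply (proj2 expander); auto).
    unfold nbhd_card in Hexp; rewrite INR_length_filter in Hexp; fold (covered E (T1 ++ a :: T2)) in Hexp.
    assert (Hsize : INR (length (T1 ++ a :: T2)) = INR (length (T1 ++ T2)) + 1)
      by (rewrite !length_app; simpl length; rewrite Nat.add_succ_r, S_INR; reflexivity).
    specialize (IH (T1 ++ T2) ltac:(rewrite length_app; lia) (NoDup_remove_1 _ _ _ Hnd)
                  (fun i Hi => Hlt i (Hin i Hi)) ltac:(rewrite length_app in *; simpl in Hk; lia)
                  (g a) (Hg a) (fun i Hi => Hmin i (Hin i Hi))).
    rewrite (fsum_ext _ _ _ (fun j => collision_insert E g T1 a T2 j Hg (fun i Hi => Hmin i (Hin i Hi)))).
    rewrite fsum_plus, fsum_scal, fsum_minus, fsum_plus, degree_sum by auto.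
    rewrite lsum_mid, Hsize in *.
    assert (Hslack : eps * INR d * (INR (length (T1 ++ T2)) + 1)
      - (INR d * (INR (length (T1 ++ T2)) + 1) - fsum m (covered E (T1 ++ a :: T2))) >= 0) by nra.
    assert (h <= g a) by (apply Hhg; exact Ha).
    nra.
Qed.

Lemma collision_bound g T : (forall i, 0 <= g i) -> NoDup T ->
  (forall i, In i T -> (i < n)%nat) -> (length T <= k)%nat ->
  fsum m (collision E g T) <= eps * INR d * lsum g T.
Proof.
  intros Hg Hnd Hlt Hk.
  pose proof (collision_bound_slack g Hg (length T) T eq_refl Hnd Hlt Hk 0 (Rle_refl 0)
                (fun i _ => Hg i)) as Hslack.
  lra.
Qed.

End Collisions.

Lemma rpow_iverson b p : rpow (iverson b) p = iverson b.
Proof.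
  destruct b; simpl; [| apply rpow_zero].
  rewrite rpow_of_pos by lra; unfold Rpower; rewrite ln_1, Rmult_0_r; apply exp_0.
Qed.

(* If T has at most N entries and N^(p-1) <= 3, the largest value M of a >= 0 on T satisfies
   M^(p-1) sum_T a <= 4 sum_T a^p: an entry a_i >= M/N is controlled by its own p-th power,
   and the entries below M/N contribute at most M^p <= sum_T a^p altogether. *)
Lemma peak_weighted_sum (a : nat -> R) T N p : (forall i, 0 <= a i) -> 0 < N ->
  INR (length T) <= N -> 1 <= p -> rpow N (p - 1) <= 3 ->
  rpow (lmax a T) (p - 1) * lsum a T <= 4 * lsum (fun i => rpow (a i) p) T.
Proof.
  intros Ha HN HT Hp HNp.
  set (M := lmax a T); set (P := lsum (fun i => rpow (a i) p) T).
  assert (HM : 0 <= M) by apply lmax_nonneg.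
  assert (HMp : rpow M p <= P).
  { unfold M, P; rewrite <- (lmax_map (fun b => rpow b p)).
    - apply lmax_le_lsum; intros; apply rpow_nonneg.
    - apply rpow_zero.
    - intros b c Hbc; apply rpow_le_compat; lra.
    - intros i _; apply Ha. }
  assert (Hterm : forall i, In i T -> rpow M (p - 1) * a i <= 3 * rpow (a i) p + rpow M p / N).
  { intros i Hi; pose proof (lmax_ge a T i Hi) as HaM; fold M in HaM.
    pose proof (Ha i); pose proof (rpow_nonneg M (p - 1)); pose proof (rpow_nonneg (a i) p).
    assert (HMN : 0 <= rpow M p / N) by (apply Rmult_le_pos; [apply rpow_nonneg | left; apply Rinv_0_lt_compat; lra]).
    destruct (Rle_dec M (N * a i)) as [Hbig | Hsmall].
    - assert (HMa : rpow M (p - 1) <= 3 * rpow (a i) (p - 1)).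
      { apply Rle_trans with (rpow (N * a i) (p - 1)); [apply rpow_le_compat; lra |].
        rewrite rpow_mult by lra; pose proof (rpow_nonneg (a i) (p - 1)); nra. }
      rewrite (rpow_succ (a i) p) by apply Ha; nra.
    - assert (Hai : a i <= M / N) by (apply (Rmult_le_reg_l N); [lra | field_simplify; lra]).
      replace (rpow M p / N) with (rpow M (p - 1) * (M / N))
        by (rewrite (rpow_succ M p) by lra; field; lra).
      nra. }
  apply Rle_trans with (lsum (fun i => 3 * rpow (a i) p + rpow M p / N) T).
  { rewrite <- lsum_scal; apply lsum_le, Hterm. }
  rewrite lsum_plus, lsum_scal, lsum_const.
  assert (INR (length T) * (rpow M p / N) <= rpow M p).
  { apply Rle_trans with (N * (rpow M p / N)).
    - apply Rmult_le_compat_r; [| exact HT].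
      apply Rmult_le_pos; [apply rpow_nonneg | left; apply Rinv_0_lt_compat; lra].
    - right; field; lra. }
  fold P; lra.
Qed.

Definition vabs (x : nat -> R) (i : nat) : R := Rabs (x i).
Definition vpow (x : nat -> R) (p : R) (i : nat) : R := rpow (Rabs (x i)) p.

Section Estimates.

Variables (n m d k : nat) (eps : R) (E : nat -> nat -> bool).
Hypothesis expander : unbalanced_expander n m d k eps E.
Hypothesis eps_nonneg : 0 <= eps.
Variables (x : nat -> R) (T : list nat).
Hypothesis T_nodup : NoDup T.
Hypothesis T_range : forall i, In i T -> (i < n)%nat.
Hypothesis T_small : (length T <= k)%nat.
Hypothesis n_pos : (0 < n)%nat.

Definition row_value (j : nat) : R := lsum (fun i => iverson (E i j) * x i) T.

Lemma row_value_bounds j :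
  row_peak E (vabs x) T j - collision E (vabs x) T j <= Rabs (row_value j)
  <= row_mass E (vabs x) T j.
Proof.
  assert (Habs : forall i, In i T -> Rabs (iverson (E i j) * x i) = row_weight E (vabs x) j i).
  { intros i _; unfold row_weight, vabs; rewrite Rabs_mult, Rabs_right by apply Rle_ge, iverson_nonneg.
    reflexivity. }
  pose proof (lsum_abs_lower (fun i => iverson (E i j) * x i) T) as Hlow.
  pose proof (lsum_abs_upper (fun i => iverson (E i j) * x i) T) as Hup.
  cbv beta in Hlow, Hup.
  rewrite (lsum_ext _ _ _ Habs) in Hlow, Hup; rewrite (lmax_ext _ _ _ Habs) in Hlow.
  unfold row_value, collision, row_mass, row_peak; split; lra.
Qed.

Lemma l1_estimate :
  (1 - 2 * eps) * (INR d * lsum (vabs x) T) <= fsum m (fun j => Rabs (row_value j))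
  <= INR d * lsum (vabs x) T.
Proof.
  pose proof (total_row_mass n m d k eps E expander (vabs x) T T_range) as Hmass.
  pose proof (collision_bound n m d k eps E expander (vabs x) T (fun i => Rabs_pos (x i))
                T_nodup T_range T_small) as Hcol.
  split.
  - apply Rle_trans with (fsum m (fun j => row_mass E (vabs x) T j - 2 * collision E (vabs x) T j)).
    + rewrite fsum_minus, fsum_scal, Hmass; lra.
    + apply fsum_le; intros j; pose proof (row_value_bounds j).
      unfold collision in *; lra.
  - rewrite <- Hmass; apply fsum_le; intros j; apply row_value_bounds.
Qed.

Variable p : R.
Hypothesis p_range : 1 <= p <= 3.
Hypothesis n_power : rpow (INR n) (p - 1) <= 3.

Lemma peak_power j : row_peak E (vpow x p) T j = rpow (row_peak E (vabs x) T j) p.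
Proof.
  unfold row_peak; rewrite <- (lmax_map (fun b => rpow b p)).
  - apply lmax_ext; intros i _; unfold row_weight, vpow, vabs.
    rewrite rpow_mult, rpow_iverson by (apply iverson_nonneg || apply Rabs_pos); reflexivity.
  - apply rpow_zero.
  - intros b c Hbc; apply rpow_le_compat; lra.
  - intros i _; apply row_weight_nonneg, Rabs_pos.
Qed.

Lemma peak_power_sum :
  (1 - eps) * (INR d * lsum (vpow x p) T) <= fsum m (fun j => rpow (row_peak E (vabs x) T j) p)
  <= INR d * lsum (vpow x p) T.
Proof.
  pose proof (total_row_mass n m d k eps E expander (vpow x p) T T_range) as Hmass.
  pose proof (collision_bound n m d k eps E expander (vpow x p) T (fun i => rpow_nonneg _ p)
                T_nodup T_range T_small) as Hcol.
  assert (Hpeaks : fsum m (fun j => rpow (row_peak E (vabs x) T j) p)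
                   = INR d * lsum (vpow x p) T - fsum m (collision E (vpow x p) T)).
  { rewrite <- Hmass, <- fsum_minus; apply fsum_ext; intros j.
    rewrite <- peak_power; unfold collision; ring. }
  assert (Hcol0 : 0 <= fsum m (collision E (vpow x p) T)).
  { rewrite <- (fsum_zero m); apply fsum_le; intros j; unfold collision, row_mass, row_peak.
    pose proof (lmax_le_lsum (row_weight E (vpow x p) j) T
                  (fun i _ => row_weight_nonneg E _ j i (rpow_nonneg _ p))); lra. }
  rewrite Hpeaks; split; lra.
Qed.

Lemma support_size : INR (length T) <= INR n.
Proof. apply le_INR, length_bounded_nodup; [exact T_nodup | exact T_range]. Qed.

(* Every row mass is at most n max|x|, so its (p-1)-th power is at most 3 max|x|^(p-1). *)
Lemma row_mass_power j :
  rpow (row_mass E (vabs x) T j) (p - 1) <= 3 * rpow (lmax (vabs x) T) (p - 1).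
Proof.
  assert (Hmass : row_mass E (vabs x) T j <= INR n * lmax (vabs x) T).
  { apply Rle_trans with (INR (length T) * lmax (vabs x) T).
    - apply lsum_le_length; intros i Hi; unfold row_weight.
      pose proof (lmax_ge (vabs x) T i Hi); pose proof (Rabs_pos (x i)); unfold vabs in *.
      destruct (E i j); simpl; lra.
    - apply Rmult_le_compat_r; [apply lmax_nonneg | exact support_size]. }
  apply Rle_trans with (rpow (INR n * lmax (vabs x) T) (p - 1)); [apply rpow_le_compat; lra |].
  rewrite rpow_mult by (apply pos_INR || apply lmax_nonneg).
  pose proof (rpow_nonneg (lmax (vabs x) T) (p - 1)); nra.
Qed.

(* Price of the collisions in the l_p estimate: by the collision lemma and
   peak_weighted_sum, 9 max|x|^(p-1) sum_j D_j <= 9 eps d max|x|^(p-1) ||x||_1 <= 36 eps d ||x||_p^p. *)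
Lemma collision_cost :
  3 * (3 * rpow (lmax (vabs x) T) (p - 1)) * fsum m (collision E (vabs x) T)
  <= 36 * eps * (INR d * lsum (vpow x p) T).
Proof.
  pose proof (collision_bound n m d k eps E expander (vabs x) T (fun i => Rabs_pos (x i))
                T_nodup T_range T_small) as Hcol.
  assert (Hmax : rpow (lmax (vabs x) T) (p - 1) * lsum (vabs x) T <= 4 * lsum (vpow x p) T)
    by exact (peak_weighted_sum (vabs x) T (INR n) p (fun i => Rabs_pos (x i))
                (lt_0_INR n n_pos) support_size (proj1 p_range) n_power).
  pose proof (rpow_nonneg (lmax (vabs x) T) (p - 1)).
  assert (Hed : 0 <= eps * INR d) by (apply Rmult_le_pos; [lra | apply pos_INR]).
  apply Rle_trans with (9 * rpow (lmax (vabs x) T) (p - 1) * (eps * INR d * lsum (vabs x) T)).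
  - apply Rle_trans with (9 * rpow (lmax (vabs x) T) (p - 1) * fsum m (collision E (vabs x) T));
      [right; ring | apply Rmult_le_compat_l; lra].
  - apply Rle_trans with (9 * (eps * INR d) * (rpow (lmax (vabs x) T) (p - 1) * lsum (vabs x) T));
      [right; ring |].
    apply Rle_trans with (9 * (eps * INR d) * (4 * lsum (vpow x p) T));
      [apply Rmult_le_compat_l; lra | right; ring].
Qed.

Lemma lp_estimate :
  (1 - 37 * eps) * (INR d * lsum (vpow x p) T) <= fsum m (fun j => rpow (Rabs (row_value j)) p)
  <= (1 + 37 * eps) * (INR d * lsum (vpow x p) T).
Proof.
  set (K := 3 * rpow (lmax (vabs x) T) (p - 1)).
  assert (Hrow : forall j,
    rpow (row_peak E (vabs x) T j) p - 3 * K * collision E (vabs x) T j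
    <= rpow (Rabs (row_value j)) p
    <= rpow (row_peak E (vabs x) T j) p + 3 * K * collision E (vabs x) T j).
  { intros j; pose proof (row_value_bounds j) as Hb.
    pose proof (lmax_le_lsum (row_weight E (vabs x) j) T
                  (fun i _ => row_weight_nonneg E _ j i (Rabs_pos (x i)))).
    pose proof (lmax_nonneg (row_weight E (vabs x) j) T).
    unfold collision, row_mass, row_peak in *.
    apply power_squeeze; try lra; [apply Rabs_pos | apply row_mass_power]. }
  pose proof peak_power_sum as Hpeaks.
  pose proof collision_cost as Hcost; fold K in Hcost.
  pose proof (fsum_le m _ _ (fun j => proj1 (Hrow j))) as Hlow.
  pose proof (fsum_le m _ _ (fun j => proj2 (Hrow j))) as Hup.
  rewrite fsum_minus, fsum_scal in Hlow; rewrite fsum_plus, fsum_scal in Hup.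
  assert (0 <= eps * (INR d * lsum (vpow x p) T)).
  { apply Rmult_le_pos; [lra |]; apply Rmult_le_pos; [apply pos_INR | apply lsum_nonneg; intros; apply rpow_nonneg]. }
  split; lra.
Qed.

End Estimates.

Lemma sparse_support n k x : sparse n k x -> exists T, NoDup T /\
  (forall i, In i T -> (i < n)%nat) /\ (length T <= k)%nat /\
  (forall i, (i < n)%nat -> ~ In i T -> x i = 0).
Proof.
  intros [S [Hnd [Hk Hz]]]; exists (filter (fun i => Nat.ltb i n) S).
  split; [apply NoDup_filter, Hnd |].
  split; [intros i Hi; apply filter_In in Hi; apply Nat.ltb_lt, Hi |].
  split; [pose proof (filter_length_le (fun i => Nat.ltb i n) S); lia |].
  intros i Hi Hout; apply Hz; [exact Hi |]; intros HS.
  apply Hout, filter_In; split; [exact HS | apply Nat.ltb_lt, Hi].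
Qed.

Section Support.

Variables (n : nat) (x : nat -> R) (T : list nat).
Hypothesis T_nodup : NoDup T.
Hypothesis T_range : forall i, In i T -> (i < n)%nat.
Hypothesis x_support : forall i, (i < n)%nat -> ~ In i T -> x i = 0.

Lemma matvec_row_value E j : matvec n (adj E) x j = row_value E x T j.
Proof.
  apply fsum_support; [exact T_nodup | exact T_range |].
  intros i Hi Hout; rewrite x_support by assumption; ring.
Qed.

Lemma pnorm_support p : pnorm n p x = rpow (lsum (vpow x p) T) (1 / p).
Proof.
  unfold pnorm; f_equal; apply fsum_support; [exact T_nodup | exact T_range |].
  intros i Hi Hout; rewrite x_support, Rabs_R0 by assumption; apply rpow_zero.
Qed.

End Support.

Lemma pnorm_scaled N D p (y : nat -> R) : 0 < D -> 0 < p ->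
  pnorm N p (fun j => rpow D (- (1 / p)) * y j)
  = rpow (/ D * fsum N (fun j => rpow (Rabs (y j)) p)) (1 / p).
Proof.
  intros HD Hp; unfold pnorm; f_equal; rewrite <- fsum_scal; apply fsum_ext; intros j.
  assert (Hc : 0 < rpow D (- (1 / p))) by (apply rpow_pos, HD).
  rewrite Rabs_mult, (Rabs_right (rpow D _)), rpow_mult by (apply Rabs_pos || lra).
  f_equal; rewrite (rpow_of_pos D), rpow_of_pos by (apply exp_pos || exact HD).
  rewrite Rpower_mult; replace (- (1 / p) * p) with (Ropp 1) by (field; lra).
  rewrite Rpower_Ropp, Rpower_1 by exact HD; reflexivity.
Qed.

Lemma pnorm_one N y : pnorm N 1 y = fsum N (fun i => Rabs (y i)).
Proof.
  unfold pnorm; replace (1 / 1) with 1 by field.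
  rewrite (fsum_ext _ _ (fun i => Rabs (y i))) by (intros; apply rpow_one, Rabs_pos).
  apply rpow_one; rewrite <- (fsum_zero N); apply fsum_le; intros; apply Rabs_pos.
Qed.

Lemma relative_bound_div a b D X Y : 0 < D -> a * (D * X) <= Y <= b * (D * X) ->
  a * X <= Y / D <= b * X.
Proof.
  intros HD [Hlo Hhi]; split; apply (Rmult_le_reg_r D); try exact HD;
    replace (Y / D * D) with Y by (field; lra); lra.
Qed.

(* For 1 <= p <= 1 + 1/ln n (n >= 2) we have p <= 3 and n^(p-1) <= e <= 3. *)
Lemma exponent_range_bounds n p : (2 <= n)%nat -> 1 <= p -> p <= 1 + 1 / ln (INR n) ->
  p <= 3 /\ rpow (INR n) (p - 1) <= 3.
Proof.
  intros Hn Hp1 Hp2.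
  assert (Hn2 : 2 <= INR n) by (apply (le_INR 2) in Hn; simpl in Hn; lra).
  assert (Hln : ln 2 <= ln (INR n)).
  { destruct (Req_dec (INR n) 2) as [-> | Hne]; [lra | left; apply ln_increasing; lra]. }
  pose proof ln_lt_2 as Hln2.
  assert (Hexp : (p - 1) * ln (INR n) <= 1).
  { apply (Rmult_le_compat_r (ln (INR n))) in Hp2; [| lra].
    replace ((1 + 1 / ln (INR n)) * ln (INR n)) with (ln (INR n) + 1) in Hp2 by (field; lra).
    lra. }
  split.
  - assert (1 / ln (INR n) <= 2).
    { apply (Rmult_le_reg_l (ln (INR n))); [lra |]; field_simplify; lra. }
    lra.
  - rewrite rpow_of_pos by lra; unfold Rpower.
    apply Rle_trans with (exp 1); [apply exp_le_compat; lra | apply exp_le_3].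
Qed.

(* Main theorem, with C = 37. *)
Theorem theorem1 :
  exists C : R, C > 1 /\
  forall (n m d k : nat) (eps : R) (E : nat -> nat -> bool),
    (2 <= n)%nat ->
    (1 <= d)%nat ->
    (d < n)%nat ->
    0 < eps ->
    / eps < INR n ->
    unbalanced_expander n m d k eps E ->
    (forall (p : R) (x : nat -> R),
        1 <= p -> p <= 1 + 1 / ln (INR n) -> sparse n k x ->
        (1 - C * eps) * pnorm n p x
          <= pnorm m p (fun j => rpow (INR d) (- (1 / p)) * matvec n (adj E) x j)
        /\ pnorm m p (fun j => rpow (INR d) (- (1 / p)) * matvec n (adj E) x j)
          <= (1 + C * eps) * pnorm n p x)
    /\
    (forall x : nat -> R, sparse n k x ->
        (1 - 2 * eps) * pnorm n 1 x <= pnorm m 1 (matvec n (adj E) x) / INR d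
        /\ pnorm m 1 (matvec n (adj E) x) / INR d <= pnorm n 1 x).
Proof.
  exists 37; split; [lra |].
  intros n m d k eps E Hn Hd _ Heps _ Hexp.
  assert (HdR : 0 < INR d) by (apply lt_0_INR; lia).
  split.
  - intros p x Hp1 Hp2 Hsp.
    destruct (exponent_range_bounds n p Hn Hp1 Hp2) as [Hp3 Hnp].
    destruct (sparse_support n k x Hsp) as [T [Hnd [Hlt [Hk Hz]]]].
    rewrite (pnorm_support n x T), pnorm_scaled by (assumption || lra).
    rewrite (fsum_ext _ _ _ (fun j => f_equal (fun v => rpow (Rabs v) p)
                                (matvec_row_value n x T Hnd Hlt Hz E j))).
    apply root_relative_bound; try lra.
    + apply lsum_nonneg; intros; apply rpow_nonneg.
    + apply (lp_estimate n m d k eps E Hexp); [lra | exact Hnd | exact Hlt | exact Hk | lia | lra | exact Hnp].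
  - intros x Hsp.
    destruct (sparse_support n k x Hsp) as [T [Hnd [Hlt [Hk Hz]]]].
    rewrite !pnorm_one, (fsum_ext _ _ _ (fun j => f_equal Rabs (matvec_row_value n x T Hnd Hlt Hz E j))).
    rewrite (fsum_support n (fun i => Rabs (x i)) T Hnd Hlt)
      by (intros i Hi Hout; rewrite Hz, Rabs_R0 by assumption; reflexivity).
    rewrite <- (Rmult_1_l (lsum _ T)) at 2.
    apply relative_bound_div; [exact HdR |].
    rewrite Rmult_1_l; exact (l1_estimate n m d k eps E Hexp x T Hnd Hlt Hk).
Qed.
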